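(* Let $A=B[x;\alpha,\delta]_p$ be a Poisson polynomial algebra over a field $k$ of characteristic zero, with $\delta$ locally nilpotent and $\alpha\delta=\delta(\alpha+s)$ for some $s\in k^\times$. Then the map $\theta:B\to B[x^{\pm1}]$, $\theta(b)=\sum_{n\ge0}\frac{1}{n!}\left(\frac{-1}{s}\right)^n\delta^n(b)x^{-n}$, is a Poisson homomorphism from $B$ to $B[x^{\pm1};\alpha,\delta]_p$.
   Context: If $B$ is a Poisson algebra, $\alpha$ a Poisson derivation of $B$ and $\delta$ a derivation of $B$ with $\delta(\{a,b\})=\{\delta(a),b\}+\{a,\delta(b)\}+\alpha(a)\delta(b)-\delta(a)\alpha(b)$ for $a,b\in B$, then $B[x;\alpha,\delta]_p$ is $B[x]$ with the unique Poisson bracket extending that of $B$ with $\{x,b\}=\alpha(b)x+\delta(b)$, and $B[x^{\pm1};\alpha,\delta]_p$ is the unique extension of this Poisson structure to $B[x^{\pm1}]$. A Poisson homomorphism is a $k$-algebra homomorphism preserving brackets. *)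

From HB Require Import structures.
From mathcomp Require Import all_boot all_order all_algebra.
Set Implicit Arguments. Unset Strict Implicit. Unset Printing Implicit Defensive.
Import Order.TTheory GRing.Theory Num.Theory.
Local Open Scope ring_scope.

Section PoissonDefs.
Variable k : fieldType.

Definition kalg_hom (A C : comAlgType k) (f : A -> C) : Prop :=
  [/\ forall (c : k) (a b : A), f (c *: a + b) = c *: f a + f b,
      forall a b : A, f (a * b) = f a * f b
    & f 1 = 1].

Definition poisson_bracket (A : comAlgType k) (br : A -> A -> A) : Prop :=
  [/\ (forall (c : k) (a b d : A), br (c *: a + b) d = c *: br a d + br b d),
      (forall (c : k) (a b d : A), br d (c *: a + b) = c *: br d a + br d b),
      (forall a : A, br a a = 0),
      (forall a b d : A, br a (br b d) + br b (br d a) + br d (br a b) = 0)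
    & (forall a b d : A, br a (b * d) = br a b * d + b * br a d)].

Definition derivation (A : comAlgType k) (D : A -> A) : Prop :=
  (forall (c : k) (a b : A), D (c *: a + b) = c *: D a + D b) /\
  (forall a b : A, D (a * b) = D a * b + a * D b).

Definition poisson_derivation (A : comAlgType k) (br : A -> A -> A) (D : A -> A)
  : Prop :=
  derivation D /\ (forall a b : A, D (br a b) = br (D a) b + br a (D b)).

(* The twisted compatibility condition required of delta in B[x; alpha, delta]_p. *)
Definition skew_poisson_compat (A : comAlgType k) (br : A -> A -> A)
  (al de : A -> A) : Prop :=
  forall a b : A,
    de (br a b) = br (de a) b + br a (de b) + al a * de b - de a * al b.

Definition locally_nilpotent (A : comAlgType k) (D : A -> A) : Prop :=
  forall a : A, exists n : nat, iter n D a == 0.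

(* (L, iota, x, xinv) is the Laurent polynomial ring B[x^{+-1}] over B:
   iota : B -> L is a k-algebra map, x is invertible with inverse xinv,
   every element is xinv^m * (polynomial in x with coefficients in iota(B)),
   and the monomials x^i are free over iota(B) (so iota is injective and
   x is transcendental over B). *)
Definition is_laurent_ring (B L : comAlgType k) (iota : B -> L) (x xinv : L)
  : Prop :=
  [/\ kalg_hom iota,
      x * xinv = 1,
      (forall f : L, exists (m N : nat) (c : nat -> B),
          f = xinv ^+ m * \sum_(i < N) iota (c i) * x ^+ i)
    & (forall (N : nat) (c : nat -> B),
          \sum_(i < N) iota (c i) * x ^+ i = 0 -> forall i, (i < N)%N -> c i = 0)].

(* The Poisson structure of B[x^{+-1}; alpha, delta]_p: a Poisson bracket brL on
   the Laurent ring L extending brB, with {x, b} = alpha(b) x + delta(b). *)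
Definition is_skew_laurent_bracket (B L : comAlgType k) (brB : B -> B -> B)
  (al de : B -> B) (iota : B -> L) (x : L) (brL : L -> L -> L) : Prop :=
  [/\ poisson_bracket brL,
      (forall a b : B, brL (iota a) (iota b) = iota (brB a b))
    & (forall b : B, brL x (iota b) = iota (al b) * x + iota (de b))].

(* theta(b) = sum_{n >= 0} 1/n! (-1/s)^n delta^n(b) x^{-n}; the sum is finite
   since delta is locally nilpotent: we sum up to the nilpotency index of b. *)
Definition theta (B L : comAlgType k) (de : B -> B) (hnil : locally_nilpotent de)
  (s : k) (iota : B -> L) (xinv : L) (b : B) : L :=
  \sum_(n < ex_minn (hnil b))
     (((n`!)%:R)^-1 * (- s^-1) ^+ n) *: (iota (iter n de b) * xinv ^+ n).

End PoissonDefs.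

From HB Require Import structures.
From mathcomp Require Import all_boot all_algebra.
From mathcomp Require Import ring zify.
Import GRing.Theory.
Set Implicit Arguments. Unset Strict Implicit. Unset Printing Implicit Defensive.
Local Open Scope ring_scope.

(* Put D = c δ with c = -1/s and Y = x^-1.  Then θ(b) = E_b(Y), where
   E_b = Σ_n Dⁿ(b)/n! Xⁿ ∈ B[X] is, in characteristic zero, the unique
   polynomial with constant term b solving E' = D(E) (D acting on coefficients).
   As D is a derivation, E_a E_b solves this equation for ab, so θ is an
   algebra map.  For brackets, {b, Y} = α(b) Y + δ(b) Y² shows that the Poisson
   bracket of p(Y) and q(Y) is the value at Y of
     p ⋆ q + α(p)·Xq' - Xp'·α(q) + X (δ(p)·Xq' - Xp'·δ(q)),
   where ⋆ is the Cauchy product with the bracket of B.  For p = E_a, q = E_b the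
   last summand vanishes because p' = c δ(p) and q' = c δ(q), and the rest solves
   the equation for {a, b}: this uses that D is compatible with the bracket as δ
   is, and that α D = D (α + s). *)

Lemma poly_biadditive_eq0 (R : nzRingType) (V : zmodType)
    (F : {poly R} -> {poly R} -> V) :
  (forall q, {morph F^~ q : p p' / p + p'}) ->
  (forall p, {morph F p : q q' / q + q'}) ->
  (forall u v i j, F (u%:P * 'X^i) (v%:P * 'X^j) = 0) ->
  forall p q, F p q = 0.
Proof.
move=> FDl FDr Fmono p q.
have F0l q' : F 0 q' = 0 by apply: (addIr (F 0 q')); rewrite -FDl !add0r.
have F0r p' : F p' 0 = 0 by apply: (addIr (F p' 0)); rewrite -FDr !add0r.
rewrite -[p]coefK -[q]coefK !poly_def (big_morph _ (FDl _) (F0l _)).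
apply: big1 => i _; rewrite (big_morph _ (FDr _) (F0r _)).
by apply: big1 => j _; rewrite -!mul_polyC Fmono.
Qed.

Lemma map_polyCXn (R S : nzRingType) (f : {additive R -> S}) u n :
  map_poly f (u%:P * 'X^n) = (f u)%:P * 'X^n.
Proof. by apply/polyP => i; rewrite coef_map !coefCM !coefXn !mulr_natr raddfMn. Qed.

Lemma deriv_map_poly (R S : nzRingType) (f : {additive R -> S}) p :
  (map_poly f p)^`() = map_poly f p^`().
Proof. by apply/polyP => i; rewrite !(coef_map, coef_deriv) raddfMn. Qed.

Lemma mulX_deriv_monomial (R : comNzRingType) (u : R) n :
  'X * (u%:P * 'X^n)^`() = (u *+ n)%:P * 'X^n.
Proof.
rewrite derivM derivC mul0r add0r derivXn polyCMn mulrnAr -mulrnAl.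
by case: n => [|n]; rewrite ?mulr0n ?mul0r ?mulr0 // exprS mulrCA.
Qed.

Section DerivationLift.
Variables (k : fieldType) (A : comAlgType k) (D : A -> A).
Hypothesis hD : derivation D.

#[local] HB.instance Definition _ :=
  GRing.isLinear.Build k A A *:%R D (proj1 hD).

Lemma derivation1 : D 1 = 0.
Proof.
have := proj2 hD 1 1; rewrite mulr1 => /eqP.
by rewrite -subr_eq0 mulr1 mul1r opprD addrA subrr sub0r oppr_eq0 => /eqP.
Qed.

Lemma map_poly_derivationM p q :
  map_poly D (p * q) = map_poly D p * q + p * map_poly D q.
Proof.
apply/polyP => n; rewrite coefD coef_map /= !coefM raddf_sum -big_split /=.
by apply: eq_bigr => i _; rewrite (proj2 hD) !coef_map.
Qed.

Lemma map_poly_derivationX : map_poly D 'X = 0.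
Proof.
apply/polyP => i; rewrite coef_map coefX coef0.
by case: (i == 1)%N; [exact: derivation1 | exact: raddf0].
Qed.

Lemma iter_derivation0 n : iter n D 0 = 0.
Proof. by elim: n => //= n ->; rewrite raddf0. Qed.

End DerivationLift.

Section ExpPoly.
Variables (k : fieldType) (A : comAlgType k) (D : A -> A).
Hypotheses (hchar : [pchar k] =i pred0) (hD : derivation D).

#[local] HB.instance Definition _ :=
  GRing.isLinear.Build k A A *:%R D (proj1 hD).

Let natf_succ_neq0 n : n.+1%:R != 0 :> k.
Proof. by rewrite ((pcharf0P _).1 hchar). Qed.

(* Meaningful only when iter N D b = 0, otherwise the series is truncated. *)
Definition exp_poly N b : {poly A} := \poly_(n < N) ((n`!%:R)^-1 *: iter n D b).

Lemma poly_ode_uniq (p q : {poly A}) : p`_0 = q`_0 ->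
  p^`() = map_poly D p -> q^`() = map_poly D q -> p = q.
Proof.
move=> pq0 Dp Dq; apply/polyP; elim=> [//|n IHn].
have : p^`()`_n = q^`()`_n by rewrite Dp Dq !coef_map IHn.
rewrite !coef_deriv -!scaler_nat => /(congr1 ( *:%R (n.+1%:R)^-1)).
by rewrite !scalerA mulVf ?scale1r.
Qed.

Lemma iter_nil N M b : iter N D b = 0 -> (N <= M)%N -> iter M D b = 0.
Proof. by move=> DNb /subnK <-; rewrite iterD DNb (iter_derivation0 hD). Qed.

Lemma coef_exp_poly N b n :
  iter N D b = 0 -> (exp_poly N b)`_n = (n`!%:R)^-1 *: iter n D b.
Proof.
by move=> DNb; rewrite coef_poly; case: ltnP => // /(iter_nil DNb) ->; rewrite scaler0.
Qed.

Lemma size_exp_poly N M b : iter N D b = 0 -> (size (exp_poly M b) <= N)%N.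
Proof.
move=> DNb; apply/leq_sizeP => n /(iter_nil DNb) Dnb.
by rewrite coef_poly Dnb scaler0 if_same.
Qed.

Lemma exp_poly_ode N b :
  iter N D b = 0 -> (exp_poly N b)^`() = map_poly D (exp_poly N b).
Proof.
move=> DNb; apply/polyP => n.
rewrite coef_deriv coef_map /= !coef_exp_poly // linearZ -scaler_nat scalerA.
by rewrite factS natrM invfM mulrA mulfV ?mul1r.
Qed.

Lemma exp_poly_uniq N b (p : {poly A}) : iter N D b = 0 ->
  p`_0 = b -> p^`() = map_poly D p -> exp_poly N b = p.
Proof.
move=> DNb p0 Dp; apply: poly_ode_uniq => //; last exact: exp_poly_ode.
by rewrite coef_exp_poly // invr1 scale1r.
Qed.

Lemma exp_polyP N (r : k) a b :
  exp_poly N (r *: a + b) = (r%:A)%:P * exp_poly N a + exp_poly N b.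
Proof.
have iterP n : iter n D (r *: a + b) = r *: iter n D a + iter n D b.
  by elim: n => //= n ->; rewrite linearP.
apply/polyP => n; rewrite coefD coefCM !coef_poly.
case: ifP => _; last by rewrite mulr0 addr0.
by rewrite iterP mulr_algl scalerDr !scalerA mulrC.
Qed.

Lemma exp_poly1 N : iter N D 1 = 0 -> exp_poly N 1 = 1.
Proof.
move=> DN1; apply: exp_poly_uniq; rewrite ?coefC // -polyC1 derivC.
by rewrite map_polyC /= (derivation1 hD) polyC0.
Qed.

Lemma exp_polyM N a b :
  iter N D a = 0 -> iter N D b = 0 -> iter N D (a * b) = 0 ->
  exp_poly N (a * b) = exp_poly N a * exp_poly N b.
Proof.
move=> DNa DNb DNab; apply: exp_poly_uniq => //.
  by rewrite coef0M !coef_exp_poly // invr1 !scale1r.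
by rewrite derivM !exp_poly_ode // (map_poly_derivationM hD).
Qed.

End ExpPoly.

Section PolyConv.
Variables (k : fieldType) (A : comAlgType k) (op : A -> A -> A).
Hypothesis hop : bilinear_for *:%R *:%R op.

#[local] HB.instance Definition _ :=
  bilinear_isBilinear.Build k A A A *:%R *:%R op hop.

Definition poly_conv (p q : {poly A}) : {poly A} :=
  \poly_(n < size p + size q) \sum_(i < n.+1) op p`_i q`_(n - i).

Lemma coef_poly_conv p q n :
  (poly_conv p q)`_n = \sum_(i < n.+1) op p`_i q`_(n - i).
Proof.
rewrite coef_poly; case: ltnP => // pq_le_n; symmetry; apply: big1 => i _.
have [ip | pi] := ltnP i (size p); last by rewrite nth_default ?linear0l.
by rewrite (@nth_default _ _ q) ?linear0r //; lia.
Qed.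

Lemma poly_convDl q : {morph poly_conv^~ q : p p' / p + p'}.
Proof.
move=> p p'; apply/polyP => n; rewrite coefD !coef_poly_conv -big_split.
by apply: eq_bigr => i _; rewrite coefD linearDl.
Qed.

Lemma poly_convDr p : {morph poly_conv p : q q' / q + q'}.
Proof.
move=> q q'; apply/polyP => n; rewrite coefD !coef_poly_conv -big_split.
by apply: eq_bigr => i _; rewrite coefD linearDr.
Qed.

Lemma poly_conv_monomial u v i j :
  poly_conv (u%:P * 'X^i) (v%:P * 'X^j) = (op u v)%:P * 'X^(i + j).
Proof.
apply/polyP => n; rewrite coef_poly_conv coefCM coefXn mulr_natr.
have [ni | ni] := ltnP n i.
  rewrite big1 => [|m _]; last first.
    by rewrite coefCM coefXn ltn_eqF ?mulr0 ?linear0l //; have := ltn_ord m; lia.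
  by rewrite ltn_eqF ?mulr0n //; lia.
rewrite (bigD1 (Ordinal (ni : i < n.+1)%N)) //= big1 => [|m /negbTE mi]; last first.
  by move: mi; rewrite -val_eqE /= coefCM coefXn => ->; rewrite mulr0 linear0l.
rewrite !coefCM !coefXn eqxx mulr1 mulr_natr linearMnr addr0.
by congr (_ *+ nat_of_bool _); apply/eqP/eqP; lia.
Qed.

Lemma deriv_poly_conv p q :
  (poly_conv p q)^`() = poly_conv p^`() q + poly_conv p q^`().
Proof.
apply/polyP => n; rewrite coef_deriv coefD !coef_poly_conv -sumrMnl.
transitivity (\sum_(i < n.+2) (op (p`_i *+ i) q`_(n.+1 - i)
                              + op p`_i (q`_(n.+1 - i) *+ (n.+1 - i)))).
  by apply: eq_bigr => i _; rewrite linearMnl linearMnr -mulrnDr subnKC // -ltnS.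
rewrite big_split /= big_ord_recl [X in _ + X]big_ord_recr /= subnn.
rewrite mulr0n linear0l add0r mulr0n linear0r addr0.
by congr (_ + _); apply: eq_bigr => i _; rewrite coef_deriv // subSn // -ltnS.
Qed.

Section Compat.
Variables (D al : A -> A).
Hypotheses (D_additive : zmod_morphism D) (al_additive : zmod_morphism al).
Hypothesis Dop : skew_poisson_compat op al D.

#[local] HB.instance Definition _ := GRing.isZmodMorphism.Build A A D D_additive.
#[local] HB.instance Definition _ := GRing.isZmodMorphism.Build A A al al_additive.

Lemma map_poly_conv p q :
  map_poly D (poly_conv p q) =
    poly_conv (map_poly D p) q + poly_conv p (map_poly D q)
    + map_poly al p * map_poly D q - map_poly D p * map_poly al q.
Proof.
apply/polyP => n; rewrite !(coefN, coefD) coef_map !coef_poly_conv !coefM /=.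
rewrite raddf_sum -sumrN -!big_split; apply: eq_bigr => i _ /=.
by rewrite !coef_map /= Dop.
Qed.

End Compat.

End PolyConv.

Section BracketPoly.
Variables (k : fieldType) (B : comAlgType k) (br : B -> B -> B) (al D : B -> B).
Variable s : k.
Hypotheses (hbr : bilinear_for *:%R *:%R br) (hD : derivation D).
Hypothesis al_additive : zmod_morphism al.
Hypothesis Dcompat : skew_poisson_compat br al D.
Hypothesis Dcomm : forall b, al (D b) = D (al b + s *: b).

#[local] HB.instance Definition _ :=
  GRing.isLinear.Build k B B *:%R D (proj1 hD).
#[local] HB.instance Definition _ := GRing.isZmodMorphism.Build B B al al_additive.

Definition bracket_poly (p q : {poly B}) : {poly B} :=
  poly_conv br p q + map_poly al p * ('X * q^`()) - ('X * p^`()) * map_poly al q.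

Lemma map_poly_comm p :
  map_poly al (map_poly D p) = map_poly D (map_poly al p) + s%:A *: map_poly D p.
Proof.
apply/polyP => n; rewrite coefD coefZ !coef_map /= Dcomm.
by rewrite linearD linearZ mulr_algl.
Qed.

Lemma coef0_bracket_poly p q : (bracket_poly p q)`_0 = br p`_0 q`_0.
Proof.
rewrite coefB coefD coef_poly_conv // big_ord1 !coef0M coefX.
by rewrite !mul0r mulr0 subr0 addr0.
Qed.

Lemma bracket_poly_ode p q :
  p^`() = map_poly D p -> q^`() = map_poly D q ->
  (bracket_poly p q)^`() = map_poly D (bracket_poly p q).
Proof.
move=> Dp Dq.
rewrite /bracket_poly !(raddfB, raddfD) /= deriv_poly_conv // !derivM derivX !mul1r.
rewrite !deriv_map_poly /= !Dp !Dq !deriv_map_poly /= Dp Dq !map_poly_comm.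
rewrite (map_poly_conv hbr _ al_additive Dcompat); last exact: zmod_morphism_linear (proj1 hD).
rewrite !(map_poly_derivationM hD) (map_poly_derivationX hD) -!mul_polyC.
ring.
Qed.

Hypothesis hchar : [pchar k] =i pred0.

Lemma exp_poly_bracket N a b :
  iter N D a = 0 -> iter N D b = 0 -> iter N D (br a b) = 0 ->
  exp_poly D N (br a b) = bracket_poly (exp_poly D N a) (exp_poly D N b).
Proof.
move=> DNa DNb DNab; apply: exp_poly_uniq => //.
  by rewrite coef0_bracket_poly !coef_exp_poly // invr1 !scale1r.
by apply: bracket_poly_ode; apply: exp_poly_ode.
Qed.

End BracketPoly.

Section PoissonAlgebra.
Variables (k : fieldType) (A : comAlgType k) (br : A -> A -> A).
Hypothesis hbr : poisson_bracket br.

Lemma poisson_bilinear : bilinear_for *:%R *:%R br.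
Proof. by case: hbr => l r *; split => u a v w; [apply: l | apply: r]. Qed.

#[local] HB.instance Definition _ :=
  bilinear_isBilinear.Build k A A A *:%R *:%R br poisson_bilinear.

Let br_self u : br u u = 0. Proof. by case: hbr. Qed.
Lemma poisson_mulr u v w : br u (v * w) = br u v * w + v * br u w.
Proof. by case: hbr. Qed.

Lemma poisson_anti u v : br u v = - br v u.
Proof.
have /eqP := br_self (u + v).
by rewrite linearDl !linearDr /= !br_self add0r addr0 addr_eq0 => /eqP.
Qed.

Lemma poisson_mull u v w : br (u * v) w = br u w * v + u * br v w.
Proof.
by rewrite poisson_anti poisson_mulr [br w u]poisson_anti [br w v]poisson_anti; ring.
Qed.

Lemma poisson1r u : br u 1 = 0.
Proof.
have /eqP := poisson_mulr u 1 1; rewrite !mulr1 mul1r -subr_eq0.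
by rewrite opprD addrA subrr sub0r oppr_eq0 => /eqP.
Qed.

Lemma poisson_exprSr u w j : br u (w ^+ j.+1) = (br u w * w ^+ j) *+ j.+1.
Proof.
elim: j => [|j IHj]; first by rewrite expr1 expr0 mulr1.
by rewrite exprS poisson_mulr IHj mulrnAr mulrCA -exprS mulrC -mulrS.
Qed.

Lemma poisson_expr u w j : br u (w ^+ j) = (br u w * w ^+ j.-1) *+ j.
Proof. by case: j => [|j]; rewrite ?poisson1r ?poisson_exprSr. Qed.

Lemma poisson_expr_expr w i j : br (w ^+ i) (w ^+ j) = 0.
Proof.
rewrite poisson_expr poisson_anti poisson_expr br_self.
by rewrite mul0r mul0rn oppr0 mul0r mul0rn.
Qed.

End PoissonAlgebra.

Section LaurentBracket.
Variables (k : fieldType) (B L : comAlgType k) (brB : B -> B -> B) (al de : B -> B).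
Variables (iota : B -> L) (x xinv : L) (brL : L -> L -> L).
Hypotheses (hbrB : bilinear_for *:%R *:%R brB) (hal : linear al) (hde : linear de).
Hypotheses (hL : is_laurent_ring iota x xinv)
           (hbrL : is_skew_laurent_bracket brB al de iota x brL).

Let iota_linear : linear iota. Proof. by case: hL => -[]. Qed.
Let iota_monoid : monoid_morphism iota. Proof. by case: hL => -[_ ? ?]. Qed.
Let brL_poisson : poisson_bracket brL. Proof. by case: hbrL. Qed.

#[local] HB.instance Definition _ :=
  bilinear_isBilinear.Build k B B B *:%R *:%R brB hbrB.
#[local] HB.instance Definition _ := GRing.isLinear.Build k B B *:%R al hal.
#[local] HB.instance Definition _ := GRing.isLinear.Build k B B *:%R de hde.
#[local] HB.instance Definition _ := GRing.isLinear.Build k B L *:%R iota iota_linear.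
#[local] HB.instance Definition _ := GRing.isMonoidMorphism.Build B L iota iota_monoid.
#[local] HB.instance Definition _ :=
  bilinear_isBilinear.Build k L L L *:%R *:%R brL (poisson_bilinear brL_poisson).

Let x_xinv : x * xinv = 1. Proof. by case: hL. Qed.

(* Expand {ι u, x x^-1} = {ι u, 1} = 0. *)
Lemma brL_iota_xinv u :
  brL (iota u) xinv = iota (al u) * xinv + iota (de u) * xinv ^+ 2.
Proof.
have brx : brL (iota u) x = - (iota (al u) * x + iota (de u)).
  by rewrite (poisson_anti brL_poisson); case: hbrL => _ _ ->.
have : brL (iota u) (x * xinv) = 0 by rewrite x_xinv (poisson1r brL_poisson).
rewrite (poisson_mulr brL_poisson) brx mulNr addrC.
move/eqP; rewrite subr_eq0 => /eqP brLxinv.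
transitivity (xinv * (x * brL (iota u) xinv)).
  by rewrite mulrA [xinv * x]mulrC x_xinv mul1r.
rewrite brLxinv; transitivity (iota (al u) * (x * xinv) * xinv + iota (de u) * xinv ^+ 2).
  by ring.
by rewrite x_xinv mulr1.
Qed.

Lemma brL_iota_xinvn u j :
  brL (iota u) (xinv ^+ j) =
  (iota (al u) * xinv ^+ j + iota (de u) * xinv ^+ j.+1) *+ j.
Proof.
rewrite (poisson_expr brL_poisson) brL_iota_xinv.
by case: j => [|j]; rewrite ?mulr0n //= !exprS; ring.
Qed.

Lemma brL_monomial u v i j :
  brL (iota u * xinv ^+ i) (iota v * xinv ^+ j) =
    iota (brB u v + al u * (v *+ j) - (u *+ i) * al v) * xinv ^+ (i + j)
  + iota (de u * (v *+ j) - (u *+ i) * de v) * xinv ^+ (i + j).+1.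
Proof.
have brL_iota a b : brL (iota a) (iota b) = iota (brB a b) by case: hbrL.
rewrite (poisson_mull brL_poisson) !(poisson_mulr brL_poisson) brL_iota.
rewrite (poisson_expr_expr brL_poisson) [brL (xinv ^+ i) _](poisson_anti brL_poisson).
rewrite !brL_iota_xinvn !(rmorphB, rmorphD, rmorphM, rmorphMn) /= !exprS !exprD.
ring.
Qed.

Definition laurent_bracket (p q : {poly B}) : {poly B} :=
  bracket_poly brB al p q
  + 'X * (map_poly de p * ('X * q^`()) - ('X * p^`()) * map_poly de q).

Lemma laurent_bracketDl q : {morph laurent_bracket^~ q : p p' / p + p'}.
Proof.
by move=> p p'; rewrite /laurent_bracket /bracket_poly (poly_convDl hbrB) !raddfD /=; ring.
Qed.

Lemma laurent_bracketDr p : {morph laurent_bracket p : q q' / q + q'}.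
Proof.
by move=> q q'; rewrite /laurent_bracket /bracket_poly (poly_convDr hbrB) !raddfD /=; ring.
Qed.

Lemma horner_laurent_bracket p q :
  brL (map_poly iota p).[xinv] (map_poly iota q).[xinv] =
  (map_poly iota (laurent_bracket p q)).[xinv].
Proof.
apply/eqP; rewrite -subr_eq0; apply/eqP; move: p q.
apply: poly_biadditive_eq0 => [q p p' | p q q' | u v i j].
- by rewrite laurent_bracketDl !raddfD !hornerD linearDl /= opprD addrACA.
- by rewrite laurent_bracketDr !raddfD !hornerD linearDr /= opprD addrACA.
rewrite !map_polyCXn !hornerCM !hornerXn brL_monomial.
rewrite /laurent_bracket /bracket_poly (poly_conv_monomial hbrB) !map_polyCXn.
rewrite !mulX_deriv_monomial !(rmorphB, rmorphD, rmorphM) /= map_polyX !map_polyC !map_polyXn.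
rewrite !(hornerD, hornerN, hornerM, hornerC, hornerX, hornerXn).
rewrite !(rmorphB, rmorphD, rmorphM, rmorphMn) /= !exprS !exprD.
ring.
Qed.

End LaurentBracket.

Section SkewLaurentTheta.
Variables (k : fieldType) (B : comAlgType k) (brB : B -> B -> B) (al de : B -> B).
Variable s : k.
Hypotheses (hchar : [pchar k] =i pred0) (hB : poisson_bracket brB).
Hypotheses (hal : poisson_derivation brB al) (hde : derivation de).
Hypotheses (hcompat : skew_poisson_compat brB al de) (hnil : locally_nilpotent de).
Hypothesis hcomm : forall b : B, al (de b) = de (al b + s *: b).
Variables (L : comAlgType k) (iota : B -> L) (x xinv : L) (brL : L -> L -> L).
Hypotheses (hL : is_laurent_ring iota x xinv)
           (hbrL : is_skew_laurent_bracket brB al de iota x brL).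

Let iota_linear : linear iota. Proof. by case: hL => -[]. Qed.
Let iota_monoid : monoid_morphism iota. Proof. by case: hL => -[_ ? ?]. Qed.

#[local] HB.instance Definition _ :=
  bilinear_isBilinear.Build k B B B *:%R *:%R brB (poisson_bilinear hB).
#[local] HB.instance Definition _ := GRing.isLinear.Build k B B *:%R al hal.1.1.
#[local] HB.instance Definition _ := GRing.isLinear.Build k B B *:%R de hde.1.
#[local] HB.instance Definition _ := GRing.isLinear.Build k B L *:%R iota iota_linear.
#[local] HB.instance Definition _ := GRing.isMonoidMorphism.Build B L iota iota_monoid.

Local Notation c := (- s^-1).
(* The value of c plays no role below, and neither does s != 0. *)
Let D b := c *: de b.
Local Notation th := (theta hnil s iota xinv).

Lemma scaled_derivation : derivation D.
Proof.
split=> [r a b | a b]; rewrite /D; first by rewrite linearP scalerDr !scalerA mulrC.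
by rewrite (proj2 hde) scalerDr scalerAl scalerAr.
Qed.

Lemma scaled_compat : skew_poisson_compat brB al D.
Proof.
move=> a b; rewrite /D hcompat !scalerDr scalerN linearZl_LR linearZr_LR.
by rewrite /= -scalerAl -scalerAr.
Qed.

Lemma scaled_comm b : al (D b) = D (al b + s *: b).
Proof. by rewrite /D linearZ /= hcomm. Qed.

Lemma iter_scaled n b : iter n D b = c ^+ n *: iter n de b.
Proof.
elim: n => [|n IHn]; first by rewrite expr0 scale1r.
by rewrite /= IHn /D linearZ scalerA -exprS.
Qed.

Lemma map_poly_scaled p : map_poly D p = c%:A *: map_poly de p.
Proof.
apply/polyP => n; rewrite coefZ coef_map_id0 ?coef_map /D ?raddf0 ?scaler0 //.
by rewrite mulr_algl.
Qed.

Let nil_index b := ex_minn (hnil b).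

Lemma iter_scaled_nil b M : (nil_index b <= M)%N -> iter M D b = 0.
Proof.
rewrite iter_scaled /nil_index; case: ex_minnP => N /eqP deNb _ /subnK <-.
by rewrite iterD deNb (iter_derivation0 hde) scaler0.
Qed.

Lemma thetaE b M : (nil_index b <= M)%N ->
  th b = (map_poly iota (exp_poly D M b)).[xinv].
Proof.
move=> bM; have DMb := iter_scaled_nil bM.
rewrite (horner_coef_wide (n := nil_index b)); last first.
  apply: leq_trans (size_poly _ _) _.
  by apply: (size_exp_poly scaled_derivation); apply: iter_scaled_nil.
apply: eq_bigr => n _; rewrite coef_map /= (coef_exp_poly scaled_derivation) // iter_scaled.
by rewrite !linearZ /= scalerA -scalerAl.
Qed.

Lemma theta_linear : linear th.
Proof.
move=> r a b; set M := (nil_index (r *: a + b) + nil_index a + nil_index b)%N.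
rewrite !(thetaE (M := M)); try lia.
rewrite (exp_polyP scaled_derivation) rmorphD rmorphM /= map_polyC.
by rewrite hornerD hornerM hornerC /= linearZ rmorph1 mulr_algl.
Qed.

Lemma theta_multiplicative : monoid_morphism th.
Proof.
split=> [|a b].
  rewrite (thetaE (M := nil_index 1)) // (exp_poly1 hchar scaled_derivation).
    by rewrite rmorph1 hornerC.
  exact: iter_scaled_nil.
set M := (nil_index (a * b) + nil_index a + nil_index b)%N.
have [DMab DMa DMb] : [/\ iter M D (a * b) = 0, iter M D a = 0 & iter M D b = 0].
  by split; apply: iter_scaled_nil; lia.
rewrite !(thetaE (M := M)); try lia.
by rewrite (exp_polyM hchar scaled_derivation) // rmorphM hornerM.
Qed.

Lemma theta_kalg_hom : kalg_hom th.
Proof.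
have [theta1 thetaM] := theta_multiplicative.
by split=> //; apply: theta_linear.
Qed.

Lemma theta_bracket a b : th (brB a b) = brL (th a) (th b).
Proof.
set M := (nil_index (brB a b) + nil_index a + nil_index b)%N.
have [DMab DMa DMb] : [/\ iter M D (brB a b) = 0, iter M D a = 0 & iter M D b = 0].
  by split; apply: iter_scaled_nil; lia.
rewrite !(thetaE (M := M)); try lia.
rewrite (horner_laurent_bracket (poisson_bilinear hB) hal.1.1 hde.1 hL hbrL).
rewrite (exp_poly_bracket (poisson_bilinear hB) scaled_derivation
  (zmod_morphism_linear hal.1.1) scaled_compat scaled_comm hchar) //.
rewrite /laurent_bracket !(exp_poly_ode hchar scaled_derivation) //.
by rewrite !map_poly_scaled -!mul_polyC; congr (map_poly _ _).[_]; ring.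
Qed.

End SkewLaurentTheta.

Theorem lemma3p7 (k : fieldType) (hchar : [pchar k] =i pred0)
  (B : comAlgType k) (brB : B -> B -> B) (al de : B -> B) (s : k)
  (hB : poisson_bracket brB)
  (hal : poisson_derivation brB al)
  (hde : derivation de)
  (hcompat : skew_poisson_compat brB al de)
  (hnil : locally_nilpotent de)
  (hs : s != 0)
  (hcomm : forall b : B, al (de b) = de (al b + s *: b))
  (L : comAlgType k) (iota : B -> L) (x xinv : L) (brL : L -> L -> L)
  (hL : is_laurent_ring iota x xinv)
  (hbrL : is_skew_laurent_bracket brB al de iota x brL) :
  kalg_hom (theta hnil s iota xinv) /\
  (forall a b : B,
      theta hnil s iota xinv (brB a b)
      = brL (theta hnil s iota xinv a) (theta hnil s iota xinv b)).
Proof.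
split; first exact (theta_kalg_hom s hchar hde hnil hL).
exact (theta_bracket hchar hB hal hde hcompat hnil hcomm hL hbrL).
Qed.
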